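(* Let $G$ and $H$ be finite abelian groups, written additively, of the same even order $k>2$, let $f:G\to H$ be semi-planar, and suppose $S(G,H;f)$ splits into two substructures $S_1$ and $S_2$ with $\mathcal{L}(0,0)\in S_1$. For $i=1,2$ and $a\in G$ let $P_a^i=\{b\in H : \mathcal{L}(a,b)\in S_i\}$. If $a,c\in G$ and $P_a^i\cap P_c^i\neq\varnothing$ for $i=1$ or $i=2$, then $P_{a-c}^1=P_{c-a}^1=P_0^1$.
   Context: A function $f:G\to H$ is semi-planar if for every non-identity $a\in G$ and every $y\in H$, the equation $f(x+a)-f(x)=y$ has either $0$ or $2$ solutions $x\in G$. The incidence structure $S(G,H;f)$ has points $(x,y)\in G\times H$ and lines $\mathcal{L}(a,b)$ for $(a,b)\in G\times H$, with $(x,y)$ incident with $\mathcal{L}(a,b)$ iff $y=f(x-a)+b$. Its incidence graph is the bipartite graph on points and lines with an edge for each incident pair. $S(G,H;f)$ splits into two substructures $S_1,S_2$ if its incidence graph has exactly two connected components; $S_1,S_2$ are the incidence structures formed by the points and lines of the two components, and $\mathcal{L}(a,b)\in S_i$ means the line lies in component $S_i$. *)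

From HB Require Import structures.
From mathcomp Require Import all_boot all_order all_algebra.
Set Implicit Arguments. Unset Strict Implicit. Unset Printing Implicit Defensive.
Import GRing.Theory.
Local Open Scope ring_scope.

Definition semi_planar (G H : finZmodType) (f : G -> H) : Prop :=
  forall (a : G) (y : H), a != 0 ->
    let n := #|[set x : G | f (x + a) - f x == y]| in (n = 0%N \/ n = 2%N).

(* Vertices of the incidence graph of S(G,H;f): points inl (x,y), lines inr (a,b). *)
Definition ivertex (G H : finZmodType) := ((G * H) + (G * H))%type.

Definition incident (G H : finZmodType) (f : G -> H) (p l : G * H) : bool :=
  p.2 == f (p.1 - l.1) + l.2.

Definition inc_adj (G H : finZmodType) (f : G -> H) : rel (ivertex G H) :=
  fun u v => match u, v with
             | inl p, inr l => incident f p l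
             | inr l, inl p => incident f p l
             | _, _ => false
             end.

(* S(G,H;f) splits into two substructures: its incidence graph has exactly
   two connected components. *)
Definition splits_in_two (G H : finZmodType) (f : G -> H) : Prop :=
  n_comp (inc_adj f) (@predT (ivertex G H)) = 2%N.

Definition in_S1 (G H : finZmodType) (f : G -> H) (a : G) (b : H) : bool :=
  connect (inc_adj f) (inr (0, 0)) (inr (a, b)).

Definition P1 (G H : finZmodType) (f : G -> H) (a : G) : {set H} :=
  [set b | in_S1 f a b].
Definition P2 (G H : finZmodType) (f : G -> H) (a : G) : {set H} :=
  [set b | ~~ in_S1 f a b].

From mathcomp Require Import all_boot all_order all_algebra.
Local Open Scope ring_scope.
Set Implicit Arguments. Unset Strict Implicit.
Import GRing.Theory.

(* The translations (x, y) |-> (x + g, y + h), applied to points and lines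
   alike, are automorphisms of S(G,H;f).  An automorphism of a graph with two
   connected components that keeps one vertex u in its own component keeps
   every vertex in its own component: on the component of u this is
   transitivity, and a vertex v moved to the other side would, among the three
   vertices v, T v, u, force T v into the component of u, whence v = T^-1 (T v)
   is there too.  If b lies in P_a^i and in P_c^i, the lines L(a,b) and L(c,b)
   are connected, so the translation by (c - a, 0) keeps every line in its
   component, i.e. P_(c-a)^1 = P_0^1; exchanging a and c gives P_(a-c)^1. *)

Section TwoComponents.
Variables (V : finType) (e : rel V).
Hypothesis e_sym : symmetric e.

Lemma connect_homo (T : V -> V) :
  {homo T : x y / e x y} -> {homo T : x y / connect e x y}.
Proof.
move=> eT x y /connectP[p]; elim: p x => [_ _ -> //|z p IH] x /=.
case/andP=> exz ezp ylast.
exact: connect_trans (connect1 (eT _ _ exz)) (IH _ ezp ylast).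
Qed.

Lemma connect_mono (T : V -> V) : injective T ->
  {mono T : x y / e x y} -> {mono T : x y / connect e x y}.
Proof.
move=> injT eT x y.
have homoT : {homo T : u v / e u v} by move=> u v; rewrite eT.
have homoTinv : {homo finv T : u v / e u v}.
  by move=> u v; rewrite -[e (finv T u) _]eT !(f_finv injT).
apply/idP/idP; last exact: connect_homo.
by move/(connect_homo homoTinv); rewrite !(finv_f injT).
Qed.

Hypothesis two_comp : n_comp e predT = 2%N.

Lemma connect_two_comp x y z :
  ~~ connect e x y -> ~~ connect e x z -> connect e y z.
Proof.
have cs := sym_connect_sym e_sym.
move=> nxy nxz; apply/negPn/negP => nyz.
have root_neq u v :
    ~~ connect e u v -> fingraph.root e u != fingraph.root e v.
  by rewrite (fingraph.root_connect cs).
have : (3 <= #|predI (roots e) (mem predT)|)%N.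
  rewrite -[3%N]/(size
    [:: fingraph.root e x; fingraph.root e y; fingraph.root e z]).
  rewrite -(card_uniqP _); last by rewrite /= !inE negb_or !root_neq.
  apply: subset_leq_card; apply/subsetP => w; rewrite !inE.
  by case/or3P=> /eqP->; rewrite fingraph.roots_root.
by move: two_comp; rewrite /n_comp_mem => ->.
Qed.

Lemma connect_mono_self (T : V -> V) u : injective T ->
  {mono T : x y / e x y} -> connect e u (T u) -> forall v, connect e v (T v).
Proof.
move=> injT eT huTu v.
have cT := connect_mono injT eT; have cs := sym_connect_sym e_sym.
have [huv | nuv] := boolP (connect e u v).
  have hvu : connect e v u by rewrite cs.
  by apply: connect_trans hvu (connect_trans huTu _); rewrite cT.
apply/negPn/negP => nvTv.
have huTv : connect e u (T v) by apply: connect_two_comp nvTv; rewrite cs.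
move/negP: nuv; apply; rewrite -cT.
by apply: connect_trans _ huTv; rewrite cs.
Qed.

End TwoComponents.

Section Translations.
Variables (G H : finZmodType) (f : G -> H).

Definition translate (g : G) (h : H) (v : ivertex G H) : ivertex G H :=
  match v with
  | inl p => inl (p.1 + g, p.2 + h)
  | inr l => inr (l.1 + g, l.2 + h)
  end.

Lemma translateK g h : cancel (translate g h) (translate (- g) (- h)).
Proof. by case=> [[x y]|[x y]] /=; rewrite !addrK. Qed.

Lemma translate_inj g h : injective (translate g h).
Proof. exact: can_inj (translateK g h). Qed.

Lemma incident_translate g h (p l : G * H) :
  incident f (p.1 + g, p.2 + h) (l.1 + g, l.2 + h) = incident f p l.
Proof.
by rewrite /incident /= [l.1 + g]addrC addrKA addrA (inj_eq (addIr h)).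
Qed.

Lemma inc_adj_translate g h :
  {mono translate g h : u v / inc_adj f u v}.
Proof. by case=> [p|l] [q|m] //=; rewrite incident_translate. Qed.

Lemma inc_adj_sym : symmetric (inc_adj f).
Proof. by case=> [p|l] [q|m]. Qed.

Hypothesis split2 : splits_in_two f.

Lemma P1_translate g u :
  connect (inc_adj f) u (translate g 0 u) -> P1 f g = P1 f 0.
Proof.
move=> huTu; apply/setP => y; rewrite !inE /in_S1.
have := connect_mono_self inc_adj_sym split2 (@translate_inj g 0)
  (@inc_adj_translate g 0) huTu (inr (0, y)).
rewrite /= add0r addr0 => h0y; apply/idP/idP => h.
  by apply: connect_trans h _; rewrite (sym_connect_sym inc_adj_sym).
exact: connect_trans h h0y.
Qed.

Lemma connect_common_P a c :
  (P1 f a :&: P1 f c != set0) \/ (P2 f a :&: P2 f c != set0) ->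
  exists b, connect (inc_adj f) (inr (a, b)) (inr (c, b)).
Proof.
case=> /set0Pn[b]; rewrite !inE /in_S1 => /andP[ha hc]; exists b.
  by apply: connect_trans hc; rewrite (sym_connect_sym inc_adj_sym).
exact: (connect_two_comp inc_adj_sym split2 ha hc).
Qed.

End Translations.

Theorem lemma5 (G H : finZmodType) (k : nat) (hG : #|G| = k) (hH : #|H| = k)
  (hkeven : ~~ odd k) (hk : (2 < k)%N) (f : G -> H)
  (hf : semi_planar f) (hsplit : splits_in_two f) (a c : G) :
  (P1 f a :&: P1 f c != set0) \/ (P2 f a :&: P2 f c != set0) ->
  P1 f (a - c) = P1 f 0 /\ P1 f (c - a) = P1 f 0.
Proof.
case/(connect_common_P hsplit) => b hac.
have hca : connect (inc_adj f) (inr (c, b)) (inr (a, b)).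
  by rewrite (sym_connect_sym (inc_adj_sym f)).
split; [apply: (P1_translate hsplit (u := inr (c, b))) |
        apply: (P1_translate hsplit (u := inr (a, b)))];
  by rewrite /= subrKC addr0.
Qed.
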